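(* Let $N$ be finite, $\mathbf P$ stochastic on $N$, $0<\beta<1$, $\mathbf R\in\mathbb R^N$, $S\subseteq N$ and $j\in S^c$. Then $a^S_{jj}\neq 0$, and with $T=S^c\setminus\{j\}$: $$\mathbf A^{S\cup\{j\}}_{T,S}=\mathbf A^S_{T,S}-\frac{\mathbf A^S_{T,j}\mathbf A^S_{j,S}}{a^S_{jj}},\qquad \mathbf A^{S\cup\{j\}}_{T,j}=\frac{\mathbf A^S_{T,j}}{a^S_{jj}},$$ $$\mathbf w^{S\cup\{j\}}_S=\mathbf w^S_S+\frac{w^S_j}{a^S_{jj}}\mathbf A^S_{S,j},\qquad w^{S\cup\{j\}}_j=\frac{w^S_j}{a^S_{jj}},\qquad \mathbf w^{S\cup\{j\}}_T=\mathbf w^S_T-\frac{w^S_j}{a^S_{jj}}\mathbf A^S_{T,j},$$ and the same three identities hold with $\mathbf w$ replaced by $\mathbf r$ throughout.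
   Context: $N$ finite, $\mathbf P=(p_{ij})$ stochastic, $\beta\in(0,1)$, $\mathbf R=(R_j)$; submatrices such as $\mathbf A^S_{T,S}$ use row set $T$ and column set $S$, and $a^S_{ij}$ are the entries of $\mathbf A^S$; $S^c=N\setminus S$. Define $$\mathbf P^S=\begin{bmatrix}\mathbf P_{SS}&\mathbf P_{SS^c}\\\mathbf 0&\mathbf I_{S^c}\end{bmatrix},\ \mathbf P^{S^c}=\begin{bmatrix}\mathbf I_S&\mathbf 0\\\mathbf P_{S^cS}&\mathbf P_{S^cS^c}\end{bmatrix},\ \mathbf A^S=(\mathbf I-\beta\mathbf P^{S^c})(\mathbf I-\beta\mathbf P^S)^{-1}.$$ With $X(t)$ the Markov chain with matrix $\mathbf P$, $\mathsf E_i$ expectation given $X(0)=i$, and $\tau_S=\min\{t\ge0:X(t)\notin S\}$: $f_i^S=\mathsf{E}_i[\sum_{t=0}^{\tau_S-1}R_{X(t)}\beta^t]$, $g_i^S=\mathsf{E}_i[\sum_{t=0}^{\tau_S-1}\beta^t]$, $w_i^S=1+\beta\sum_kp_{ik}g_k^S-\beta g_i^S$, $r_i^S=R_i+\beta\sum_kp_{ik}f_k^S-\beta f_i^S$; $\mathbf w^S,\mathbf r^S$ are the column vectors of these, and subscripts denote sub-vectors. *)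

From HB Require Import structures.
From mathcomp Require Import all_boot all_order all_algebra.
From mathcomp Require Import all_classical all_reals all_analysis.
Set Implicit Arguments. Unset Strict Implicit. Unset Printing Implicit Defensive.
Import Order.TTheory GRing.Theory Num.Theory.
Local Open Scope ring_scope.

Section Defs.
Variables (R : realType) (n : nat).
Implicit Types (P : 'M[R]_n) (S : {set 'I_n}) (beta : R) (Rw : 'I_n -> R).

Definition stochastic P :=
  (forall i k, 0 <= P i k) /\ (forall i, \sum_(k < n) P i k = 1).

Definition PS P S : 'M[R]_n :=
  \matrix_(i, k) (if i \in S then P i k else (i == k)%:R).

Definition PSc P S : 'M[R]_n :=
  \matrix_(i, k) (if i \in S then (i == k)%:R else P i k).

Definition Amx P beta S : 'M[R]_n :=
  (1%:M - beta *: PSc P S) *m invmx (1%:M - beta *: PS P S).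

(* E_i[ R_{X(t)} 1{t < tau_S} ] for the chain started at i: sum over all
   paths x(0)=i, x(1),...,x(t) of their probability, restricted to paths that
   stay in S up to time t (this is exactly the event t < tau_S). *)
Definition killed_term P S Rw (i : 'I_n) (t : nat) : R :=
  \sum_(x : {ffun 'I_t.+1 -> 'I_n} | (x ord0 == i) && [forall s, x s \in S])
    (\prod_(s < t) P (x (widen_ord (leqnSn t) s)) (x (lift ord0 s)))
      * Rw (x ord_max).

(* f_i^S = E_i[ sum_{t=0}^{tau_S - 1} R_{X(t)} beta^t ] *)
Definition fS P beta S Rw (i : 'I_n) : R :=
  limn (fun m => \sum_(0 <= t < m) beta ^+ t * killed_term P S Rw i t).

Definition gS P beta S (i : 'I_n) : R := fS P beta S (fun _ => 1) i.

Definition wS P beta S (i : 'I_n) : R :=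
  1 + beta * \sum_(k < n) P i k * gS P beta S k - beta * gS P beta S i.

Definition rS P beta S Rw (i : 'I_n) : R :=
  Rw i + beta * \sum_(k < n) P i k * fS P beta S Rw k - beta * fS P beta S Rw i.

End Defs.

(* Write M_S = I - beta P^S and N_S = I - beta P^{S^c}, so that A^S M_S = N_S.
   1. Values as linear solutions.  The killed path sums obey the one-step
      recursion of the chain stopped on leaving S; as I - beta Q is invertible
      for every substochastic Q, the partial discounted sums converge
      geometrically to the unique solution of f = 1_S (R + beta P f), which
      is therefore f^S (`fS_fixed_point`).  Since g^S is f^S for the reward 1
      and w^S is r^S for that reward, only r has to be treated.
   2. Rank-one update.  M_{S+j} and N_{S+j} differ from M_S and N_S only in
      row j, by the row d = N_S[j] - M_S[j].  With v = M_S^{-1} e_j, the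
      entry A_jj cannot vanish (else M_{S+j} v = 0), and a Sherman-Morrison
      computation gives every row t <> j of A^{S+j} (`Amx_add_row`).
   3. Value update.  f^{S+j} = f^S + (r^S_j / A_jj) v, and v is explicit on
      S, at j and outside S + j; this yields the three identities for r. *)
From HB Require Import structures.
From mathcomp Require Import all_boot all_order all_algebra.
From mathcomp Require Import all_classical all_reals all_analysis.
From mathcomp Require Import ring.
Import Order.TTheory GRing.Theory Num.Theory.
Local Open Scope ring_scope.

Set Implicit Arguments.
Unset Strict Implicit.

Section KilledTerm.
Variables (R : realType) (n : nat) (P : 'M[R]_n) (S : {set 'I_n}) (Rw : 'I_n -> R).

(* At time 0 the only path is the constant one, which survives iff i \in S. *)
Lemma killed_term0 i : killed_term P S Rw i 0 = (i \in S)%:R * Rw i.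
Proof.
rewrite /killed_term; case: (boolP (i \in S)) => iS; last first.
  rewrite big_pred0 ?mul0r // => x; apply/negbTE/negP.
  by case/andP=> /eqP x0 /forallP/(_ ord0); rewrite x0; apply/negP.
rewrite (big_pred1 [ffun=> i]); first by rewrite big_ord0 mul1r ffunE mul1r.
move=> x /=; apply/idP/eqP => [/andP[/eqP x0 _]|->].
  by apply/ffunP=> s; rewrite ffunE (ord1 s).
by rewrite ffunE eqxx; apply/forallP=> s; rewrite ffunE.
Qed.

(* First-step decomposition: a surviving path of length t+1 from i is a step
   i -> k followed by a surviving path of length t from k. *)
Lemma killed_termS i t : killed_term P S Rw i t.+1 =
  (i \in S)%:R * \sum_k P i k * killed_term P S Rw k t.
Proof.
pose cons_path (y : {ffun 'I_t.+1 -> 'I_n}) : {ffun 'I_t.+2 -> 'I_n} :=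
  [ffun s => if unlift ord0 s is Some s' then y s' else i].
pose tail_path (x : {ffun 'I_t.+2 -> 'I_n}) : {ffun 'I_t.+1 -> 'I_n} :=
  [ffun s => x (lift ord0 s)].
have cons0 y : cons_path y ord0 = i by rewrite ffunE unlift_none.
have consS y s : cons_path y (lift ord0 s) = y s by rewrite ffunE liftK.
have tail_consK y : tail_path (cons_path y) = y.
  by apply/ffunP=> s; rewrite ffunE consS.
rewrite /killed_term (reindex_onto cons_path tail_path) /=; last first.
  move=> x /andP[/eqP x0 _]; apply/ffunP=> s; rewrite ffunE.
  by case: (unliftP ord0 s) => [s'|] ->; rewrite ?ffunE.
under eq_bigl => y do rewrite tail_consK eqxx andbT cons0 eqxx /=.
case: (boolP (i \in S)) => iS; last first.
  rewrite mul0r big_pred0 // => y; apply/negbTE/negP=> /forallP/(_ ord0).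
  by rewrite cons0; apply/negP.
have cons_in y : [forall s, cons_path y s \in S] = [forall s, y s \in S].
  apply/forallP/forallP => Hy s; first by rewrite -consS.
  by case: (unliftP ord0 s) => [s'|] ->; rewrite ?consS ?cons0.
under eq_bigl => y do rewrite cons_in.
rewrite mul1r (partition_big (fun y : {ffun 'I_t.+1 -> 'I_n} => y ord0) xpredT) //=.
apply: eq_bigr => k _; rewrite big_distrr /=.
apply: eq_big => [y|y /andP[_ /eqP y0]]; first by rewrite andbC.
rewrite big_ord_recl.
have -> : widen_ord (leqnSn t.+1) ord0 = ord0 :> 'I_t.+2 by apply: val_inj.
rewrite cons0 consS y0 mulrA; congr (_ * _ * _).
  apply: eq_bigr => s _.
  have -> : widen_ord (leqnSn t.+1) (lift ord0 s) = lift ord0 (widen_ord (leqnSn t) s).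
    by apply: val_inj.
  by rewrite !consS.
have -> : (ord_max : 'I_t.+2) = lift ord0 (ord_max : 'I_t.+1) by apply: val_inj.
by rewrite consS.
Qed.

End KilledTerm.

(* For a substochastic Q and 0 <= b < 1, I - b Q is invertible: a solution of
   x = b Q x has a maximal coordinate m with |m| <= b |m|, hence x = 0. *)
Lemma unitmx_I_sub_substochastic (R : realType) (n : nat) (Q : 'M[R]_n) (b : R) :
  (forall i k, 0 <= Q i k) -> (forall i, \sum_k Q i k <= 1) ->
  0 <= b -> b < 1 -> (1%:M - b *: Q) \in unitmx.
Proof.
move=> Q_ge0 Q_le1 b_ge0 b_lt1.
suff ker0 : forall v : 'rV[R]_n, v *m (1%:M - b *: Q)^T = 0 -> v = 0.
  rewrite -unitmx_tr -row_free_unit -kermx_eq0.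
  apply/eqP/row_matrixP => i; rewrite row0.
  by apply: ker0; apply/sub_kermxP; exact: row_sub.
move=> v Hv.
have fixv i : v 0 i = b * \sum_k Q i k * v 0 k.
  move: Hv; rewrite linearB /= trmx1 mulmxBr mulmx1 linearZ /= -scalemxAr.
  move/eqP; rewrite subr_eq0 => /eqP /matrixP /(_ 0 i); rewrite !mxE => ->.
  by congr (_ * _); apply: eq_bigr => k _; rewrite mxE mulrC.
case: (pickP (fun _ : 'I_n => true)) => [i0 _|none]; last first.
  by apply/matrixP => a k; have := none k.
case: (@arg_maxP _ _ _ i0 xpredT (fun k => `|v 0 k|) isT) => i _ i_max.
have contract : `|v 0 i| <= b * `|v 0 i|.
  rewrite {1}fixv normrM ger0_norm //; apply: ler_wpM2l => //.
  apply: le_trans (ler_norm_sum _ _ _) _.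
  apply: le_trans (_ : \sum_k Q i k * `|v 0 i| <= _).
    apply: ler_sum => k _; rewrite normrM ger0_norm //.
    by apply: ler_wpM2l => //; exact: i_max.
  by rewrite -mulr_suml ler_piMl.
have vi0 : `|v 0 i| = 0.
  apply/eqP; rewrite eq_le normr_ge0 andbT.
  have : (1 - b) * `|v 0 i| <= 0 by rewrite mulrBl mul1r subr_le0.
  by rewrite pmulr_rle0 // subr_gt0.
apply/rowP => k; rewrite mxE; apply/eqP.
by rewrite -normr_eq0 eq_le normr_ge0 andbT -vi0; exact: i_max.
Qed.

Section GeometricLimit.
Import numFieldNormedType.Exports.
Local Open Scope classical_set_scope.

Lemma limn_geometric_approx (R : realType) (u : nat -> R) (x b C : R) :
  0 <= b -> b < 1 -> (forall m, `|u m - x| <= b ^+ m * C) -> limn u = x.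
Proof.
move=> b_ge0 b_lt1 err; apply: cvg_lim => //.
have err0 : (b ^+ m * C) @[m --> \oo] --> (0 : R).
  rewrite -(mul0r C); apply: cvgM (cvg_cst _).
  by apply: cvg_expr; rewrite ger0_norm.
apply: (@squeeze_cvgr _ _ _ _ (fun m => x - b ^+ m * C) (fun m => x + b ^+ m * C)).
- by apply: nearW => m; have := err m; rewrite ler_distl.
- by rewrite -[X in _ --> X](subr0 x); exact: (cvgB (cvg_cst _) err0).
- by rewrite -[X in _ --> X](addr0 x); exact: (cvgD (cvg_cst _) err0).
Qed.

End GeometricLimit.

Section DiscountedValue.
Variables (R : realType) (n : nat) (P : 'M[R]_n) (S : {set 'I_n}).
Variables (Rw : 'I_n -> R) (beta : R).
Hypotheses (HP : stochastic P) (beta_gt0 : 0 < beta) (beta_lt1 : beta < 1).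

Definition partial_value m i :=
  \sum_(0 <= t < m) beta ^+ t * killed_term P S Rw i t.

Lemma partial_valueS m i : partial_value m.+1 i =
  (i \in S)%:R * (Rw i + beta * \sum_k P i k * partial_value m k).
Proof.
rewrite /partial_value big_nat_recl // expr0 mul1r killed_term0 mulrDr.
congr (_ + _); under eq_bigr => t _ do rewrite killed_termS exprS mulrCA -mulrA.
rewrite -mulr_sumr; congr (_ * _); rewrite -mulr_sumr; congr (_ * _).
under eq_bigr => t _ do rewrite mulr_sumr.
rewrite exchange_big /=; apply: eq_bigr => k _; rewrite mulr_sumr.
by apply: eq_bigr => t _; rewrite mulrCA.
Qed.

Definition killed_mx : 'M[R]_n := \matrix_(i, k) ((i \in S)%:R * P i k).

(* It is substochastic, so I - beta Q is invertible. *)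
Lemma killed_mx_unit : (1%:M - beta *: killed_mx) \in unitmx.
Proof.
case: HP => P_ge0 P_sum1.
apply: unitmx_I_sub_substochastic => [i k|i||]; last 2 first.
- exact: ltW.
- exact: beta_lt1.
- by rewrite mxE mulr_ge0 // ler0n.
under eq_bigr => k _ do rewrite mxE.
by rewrite -mulr_sumr P_sum1 mulr1; case: (_ \in _).
Qed.

Definition value_vec : 'cV[R]_n :=
  invmx (1%:M - beta *: killed_mx) *m \col_i ((i \in S)%:R * Rw i).

Lemma value_vec_eq i :
  value_vec i 0 = (i \in S)%:R * (Rw i + beta * \sum_k P i k * value_vec k 0).
Proof.
have := mulKVmx killed_mx_unit (\col_i ((i \in S)%:R * Rw i)).
rewrite -/value_vec mulmxBl mul1mx -scalemxAl.
move/eqP; rewrite subr_eq => /eqP /matrixP /(_ i 0); rewrite !mxE => ->.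
rewrite mulrDr; congr (_ + _); rewrite mulrCA; congr (_ * _); rewrite mulr_sumr.
by apply: eq_bigr => k _; rewrite !mxE mulrA.
Qed.

(* Value iteration contracts by beta in the sup norm, starting from 0. *)
Lemma partial_value_error m i : `|partial_value m i - value_vec i 0| <=
  beta ^+ m * \sum_k `|value_vec k 0|.
Proof.
case: HP => P_ge0 P_sum1; set C := \sum_k _.
elim: m i => [|m IH] i.
  rewrite /partial_value big_geq // sub0r normrN expr0 mul1r /C (bigD1 i) //=.
  by rewrite lerDl sumr_ge0.
rewrite partial_valueS value_vec_eq -mulrBr opprD addrACA subrr add0r -mulrBr.
rewrite -sumrB normrM.
apply: le_trans (_ : 1 * _ <= _).
  by apply: ler_wpM2r => //; case: (i \in S); rewrite ?normr1 ?normr0.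
rewrite mul1r normrM (ger0_norm (ltW beta_gt0)) exprS -mulrA.
apply: ler_wpM2l; first exact: ltW.
apply: le_trans (ler_norm_sum _ _ _) _.
apply: le_trans (_ : \sum_k P i k * (beta ^+ m * C) <= _).
  apply: ler_sum => k _; rewrite -mulrBr normrM ger0_norm //.
  by apply: ler_wpM2l.
by rewrite -mulr_suml P_sum1 mul1r.
Qed.

Lemma fS_fixed_point i :
  fS P beta S Rw i = (i \in S)%:R * (Rw i + beta * \sum_k P i k * fS P beta S Rw k).
Proof.
have fS_value k : fS P beta S Rw k = value_vec k 0.
  apply: (@limn_geometric_approx _ _ _ beta (\sum_l `|value_vec l 0|)).
  - exact: ltW.
  - exact: beta_lt1.
  - by move=> m; exact (partial_value_error m k).
rewrite fS_value value_vec_eq; congr (_ * (_ + _ * _)).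
by apply: eq_bigr => k _; rewrite fS_value.
Qed.

End DiscountedValue.

Lemma sum_delta (R : pzSemiRingType) (n : nat) (i : 'I_n) (x : 'I_n -> R) :
  \sum_k (i == k)%:R * x k = x i.
Proof.
rewrite (bigD1 i) //= eqxx mul1r big1 ?addr0 // => k /negbTE.
by rewrite eq_sym => ->; rewrite mul0r.
Qed.

Section RankOneUpdate.
Variables (R : realType) (n : nat) (P : 'M[R]_n) (beta : R).
Hypotheses (HP : stochastic P) (beta_gt0 : 0 < beta) (beta_lt1 : beta < 1).

Definition Mmx (S : {set 'I_n}) : 'M[R]_n := 1%:M - beta *: PS P S.
Definition Nmx (S : {set 'I_n}) : 'M[R]_n := 1%:M - beta *: PSc P S.

Lemma sum_I_sub_betaP (x : 'I_n -> R) i :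
  \sum_k ((i == k)%:R - beta * P i k) * x k = x i - beta * \sum_k P i k * x k.
Proof.
under eq_bigr => k _ do rewrite mulrBl.
rewrite sumrB sum_delta mulr_sumr; congr (_ - _).
by apply: eq_bigr => k _; rewrite mulrA.
Qed.

Lemma sum_scaled_delta (x : 'I_n -> R) i :
  \sum_k (1 - beta) * (i == k)%:R * x k = (1 - beta) * x i.
Proof. by rewrite -sum_delta mulr_sumr; apply: eq_bigr => k _; rewrite mulrA. Qed.

Lemma MmxE S i k : Mmx S i k =
  if i \in S then (i == k)%:R - beta * P i k else (1 - beta) * (i == k)%:R.
Proof. by rewrite !mxE; case: ifP => _ //; rewrite mulrBl mul1r. Qed.

Lemma NmxE S i k : Nmx S i k =
  if i \in S then (1 - beta) * (i == k)%:R else (i == k)%:R - beta * P i k.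
Proof. by rewrite !mxE; case: ifP => _ //; rewrite mulrBl mul1r. Qed.

Lemma Mmx_mul S (X : 'cV[R]_n) i : (Mmx S *m X) i 0 =
  if i \in S then X i 0 - beta * \sum_k P i k * X k 0 else (1 - beta) * X i 0.
Proof.
rewrite mxE; under eq_bigr => k _ do rewrite MmxE.
by case: ifP => _; rewrite ?sum_I_sub_betaP ?sum_scaled_delta.
Qed.

Lemma Nmx_mul S (X : 'cV[R]_n) i : (Nmx S *m X) i 0 =
  if i \in S then (1 - beta) * X i 0 else X i 0 - beta * \sum_k P i k * X k 0.
Proof.
rewrite mxE; under eq_bigr => k _ do rewrite NmxE.
by case: ifP => _; rewrite ?sum_I_sub_betaP ?sum_scaled_delta.
Qed.

(* P^S is substochastic, so M_S is invertible. *)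
Lemma Mmx_unit S : Mmx S \in unitmx.
Proof.
case: HP => P_ge0 P_sum1.
apply: unitmx_I_sub_substochastic => [i k|i||]; last 2 first.
- exact: ltW.
- exact: beta_lt1.
- by rewrite mxE; case: ifP => _ //; rewrite ler0n.
under eq_bigr => k _ do rewrite mxE.
case: (i \in S); first by rewrite P_sum1.
by under eq_bigr => k _ do rewrite -[_%:R]mulr1; rewrite sum_delta.
Qed.

Lemma Amx_Mmx S : Amx P beta S *m Mmx S = Nmx S.
Proof. exact: (mulmxKV (Mmx_unit S) (Nmx S)). Qed.

Variables (S : {set 'I_n}) (j : 'I_n).
Hypothesis jNS : j \notin S.

Local Notation S' := (j |: S).
Local Notation A := (Amx P beta S).

Lemma Mmx_add i k : Mmx S' i k = Mmx S i k + (i == j)%:R * (Nmx S j k - Mmx S j k).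
Proof.
rewrite !MmxE NmxE (negbTE jNS) in_setU1 /=.
case: (eqVneq i j) => [->|ij] /=; first by rewrite (negbTE jNS); ring.
by rewrite mul0r addr0.
Qed.

Lemma Nmx_add i k : Nmx S' i k = Nmx S i k - (i == j)%:R * (Nmx S j k - Mmx S j k).
Proof.
rewrite !NmxE MmxE (negbTE jNS) in_setU1 /=.
case: (eqVneq i j) => [->|ij] /=; first by rewrite (negbTE jNS); ring.
by rewrite mul0r subr0.
Qed.

Lemma Mmx_add_mulmx (X : 'cV[R]_n) i : (Mmx S' *m X) i 0 =
  (Mmx S *m X) i 0 + (i == j)%:R * ((Nmx S *m X) j 0 - (Mmx S *m X) j 0).
Proof.
rewrite !mxE; under eq_bigr => k _ do rewrite Mmx_add mulrDl.
rewrite big_split /=; congr (_ + _); rewrite -sumrB mulr_sumr.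
by apply: eq_bigr => k _; rewrite -mulrBl mulrA.
Qed.

Lemma mulmx_Mmx_add (x : 'rV[R]_n) k : (x *m Mmx S') 0 k =
  (x *m Mmx S) 0 k + x 0 j * (Nmx S j k - Mmx S j k).
Proof.
rewrite [in LHS]mxE [(x *m Mmx S) 0 k]mxE.
under eq_bigr => i _ do rewrite Mmx_add mulrDr.
rewrite big_split /=; congr (_ + _).
rewrite (bigD1 j) //= eqxx mul1r big1 ?addr0 // => i /negbTE ->.
by rewrite mul0r mulr0.
Qed.

(* The column v = M_S^{-1} e_j, through which A^S and f^S change. *)
Definition ej : 'cV[R]_n := \col_i (i == j)%:R.
Definition vj : 'cV[R]_n := invmx (Mmx S) *m ej.

Lemma ejE i : ej i 0 = (i == j)%:R.
Proof. by rewrite mxE. Qed.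

Lemma Mmx_vj : Mmx S *m vj = ej.
Proof. exact: (mulKVmx (Mmx_unit S) ej). Qed.

Lemma Nmx_vj i : (Nmx S *m vj) i 0 = A i j.
Proof.
rewrite /vj mulmxA -/A mxE; under eq_bigr => k _ do rewrite ejE.
by rewrite -[RHS](sum_delta j (A i)); apply: eq_bigr => k _; rewrite mulrC eq_sym.
Qed.

Lemma vj_in i : i \in S -> (1 - beta) * vj i 0 = A i j.
Proof. by move=> iS; rewrite -Nmx_vj Nmx_mul iS. Qed.

Lemma vj_j : (1 - beta) * vj j 0 = 1.
Proof. by have := Mmx_mul S vj j; rewrite (negbTE jNS) Mmx_vj ejE eqxx => <-. Qed.

Lemma vj_out i : i \notin S -> i != j -> vj i 0 = 0.
Proof.
move=> iNS ij; have := Mmx_mul S vj i.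
rewrite (negbTE iNS) Mmx_vj ejE (negbTE ij) => /esym/eqP.
rewrite mulf_eq0 => /orP[|/eqP//]; rewrite subr_eq0 => /eqP beta1.
by move: beta_lt1; rewrite -beta1 ltxx.
Qed.

Lemma Amx_out i : i \notin S -> A i j = vj i 0 - beta * \sum_k P i k * vj k 0.
Proof. by move=> iNS; rewrite -Nmx_vj Nmx_mul (negbTE iNS). Qed.

(* If A_jj = 0 then M_{S+j} v = 0, contradicting invertibility. *)
Lemma Amx_jj_neq0 : A j j != 0.
Proof.
apply/negP => /eqP Ajj0.
have M'v : Mmx S' *m vj = 0.
  apply/matrixP => i c; rewrite (ord1 c) Mmx_add_mulmx Mmx_vj Nmx_vj !ejE Ajj0.
  by rewrite [RHS]mxE eqxx; case: (eqVneq i j) => _ /=; ring.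
have v0 : vj = 0 by rewrite -(mulKmx (Mmx_unit S') vj) M'v mulmx0.
have := Mmx_vj; rewrite v0 mulmx0 => /matrixP /(_ j 0).
by rewrite ejE eqxx mxE => /eqP; rewrite eq_sym oner_eq0.
Qed.

(* Row t <> j of A^{S+j}: y = A_t - (A_tj / A_jj) (A_j - e_j^T) satisfies
   y M_{S+j} = N_{S+j}[t], which characterises that row. *)
Lemma Amx_add_row t k : t != j ->
  Amx P beta S' t k = A t k - A t j / A j j * (A j k - (j == k)%:R).
Proof.
move=> tj; pose c := A t j / A j j.
pose y : 'rV[R]_n := \row_l (A t l - c * (A j l - (j == l)%:R)).
suff /rowP/(_ k) : row t (Amx P beta S') = y by rewrite mxE [y 0 k]mxE.
have yE : y = row t A - c *: (row j A - row j 1%:M).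
  by apply/rowP => l; rewrite !mxE.
have yj : y 0 j = A t j - c * (A j j - 1) by rewrite mxE eqxx.
apply: (can_inj (mulmxK (Mmx_unit S'))); apply/rowP => k'.
rewrite -row_mul Amx_Mmx mulmx_Mmx_add yj yE mulmxBl -scalemxAl mulmxBl.
rewrite -!row_mul Amx_Mmx mul1mx.
have := Amx_jj_neq0; rewrite /c.
move: (Nmx S) (Mmx S) (Nmx S') (Nmx_add t k') (A t j) (A j j) => N M N' EN atj ajj ajj0.
by rewrite !mxE EN (negbTE tj) mul0r subr0; field.
Qed.

Variable Rw : 'I_n -> R.

Lemma fS_out (T : {set 'I_n}) i : i \notin T -> fS P beta T Rw i = 0.
Proof. by move=> iNT; rewrite fS_fixed_point // (negbTE iNT) mul0r. Qed.

Lemma rS_in (T : {set 'I_n}) i : i \in T ->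
  rS P beta T Rw i = (1 - beta) * fS P beta T Rw i.
Proof.
move=> iT; rewrite /rS [in RHS]fS_fixed_point // iT mul1r.
by rewrite [in LHS]fS_fixed_point // iT mul1r; ring.
Qed.

Lemma rS_out (T : {set 'I_n}) i : i \notin T ->
  rS P beta T Rw i = Rw i + beta * \sum_k P i k * fS P beta T Rw k.
Proof. by move=> iNT; rewrite /rS fS_out // mulr0 subr0. Qed.

Lemma Mmx_fS (T : {set 'I_n}) :
  Mmx T *m \col_i fS P beta T Rw i = \col_i ((i \in T)%:R * Rw i).
Proof.
apply/matrixP => i c; rewrite (ord1 c) Mmx_mul.
under eq_bigr => k _ do rewrite mxE.
rewrite !mxE fS_fixed_point //; case: (boolP (i \in T)) => iT.
  by rewrite !mul1r addrK.
by rewrite !mul0r mulr0.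
Qed.

(* f^{S+j} = f^S + (r^S_j / A_jj) v: the right side solves the equation for
   S + j, whose solution is unique. *)
Lemma fS_add i :
  fS P beta S' Rw i = fS P beta S Rw i + rS P beta S Rw j / A j j * vj i 0.
Proof.
set c := rS P beta S Rw j / A j j.
pose g := \col_l fS P beta S Rw l + c *: vj.
have cA : c * A j j = Rw j + beta * \sum_k P j k * fS P beta S Rw k.
  by rewrite /c divfK ?Amx_jj_neq0 // rS_out.
have Mg : Mmx S' *m g = \col_l ((l \in S')%:R * Rw l).
  apply/matrixP => i' c0; rewrite (ord1 c0) Mmx_add_mulmx.
  rewrite !mulmxDr -!scalemxAr Mmx_fS Mmx_vj [(_ + c *: (Nmx S *m vj)) j 0]mxE.
  rewrite [(c *: (Nmx S *m vj)) j 0]mxE Nmx_vj Nmx_mul (negbTE jNS) cA.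
  rewrite !mxE in_setU1 fS_out // (negbTE jNS) eqxx /=.
  under eq_bigr => k _ do rewrite mxE.
  case: (eqVneq i' j) => [->|_] /=; last by ring.
  by rewrite (negbTE jNS) /= mul0r mul1r; ring.
have : \col_l fS P beta S' Rw l = g.
  by apply: (can_inj (mulKmx (Mmx_unit S'))); rewrite Mmx_fS Mg.
by move/matrixP/(_ i 0); rewrite !mxE.
Qed.

Lemma rS_add_in s : s \in S ->
  rS P beta S' Rw s = rS P beta S Rw s + rS P beta S Rw j / A j j * A s j.
Proof.
move=> sS; rewrite rS_in ?in_setU1 ?sS ?orbT // rS_in // fS_add -(vj_in sS).
by ring.
Qed.

Lemma rS_add_j : rS P beta S' Rw j = rS P beta S Rw j / A j j.
Proof. by rewrite rS_in ?setU11 // fS_add fS_out // add0r mulrCA vj_j mulr1. Qed.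

Lemma rS_add_out t : t \notin S -> t != j ->
  rS P beta S' Rw t = rS P beta S Rw t - rS P beta S Rw j / A j j * A t j.
Proof.
move=> tNS tj; have tNS' : t \notin S' by rewrite in_setU1 negb_or tj tNS.
rewrite (rS_out tNS') (rS_out tNS) (Amx_out tNS) vj_out //.
under eq_bigr => k _ do rewrite fS_add mulrDr mulrCA.
by rewrite big_split /= -mulr_sumr; ring.
Qed.

End RankOneUpdate.

Unset Implicit Arguments.

Theorem mainTheorem9 (R : realType) (n : nat) (P : 'M[R]_n) (beta : R)
  (Rw : 'I_n -> R) (S : {set 'I_n}) (j : 'I_n) :
  stochastic P -> 0 < beta -> beta < 1 -> j \notin S ->
  let A := Amx P beta S in
  let A' := Amx P beta (j |: S) in
  let T := [set t | (t \notin S) && (t != j)] in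
  A j j != 0 /\
  (forall t s, t \in T -> s \in S -> A' t s = A t s - A t j * A j s / A j j) /\
  (forall t, t \in T -> A' t j = A t j / A j j) /\
  (* identities for w *)
  (forall s, s \in S ->
     wS P beta (j |: S) s = wS P beta S s + wS P beta S j / A j j * A s j) /\
  wS P beta (j |: S) j = wS P beta S j / A j j /\
  (forall t, t \in T ->
     wS P beta (j |: S) t = wS P beta S t - wS P beta S j / A j j * A t j) /\
  (* identities for r *)
  (forall s, s \in S ->
     rS P beta (j |: S) Rw s = rS P beta S Rw s + rS P beta S Rw j / A j j * A s j) /\
  rS P beta (j |: S) Rw j = rS P beta S Rw j / A j j /\
  (forall t, t \in T ->
     rS P beta (j |: S) Rw t = rS P beta S Rw t - rS P beta S Rw j / A j j * A t j).
Proof.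
move=> HP beta_gt0 beta_lt1 jNS A A' T; rewrite {}/A {}/A'.
have Ajj_neq0 := Amx_jj_neq0 HP beta_gt0 beta_lt1 jNS.
have row_add := Amx_add_row HP beta_gt0 beta_lt1 jNS.
(* w^S is r^S for the constant reward 1, so each r identity is used twice. *)
have r_in := rS_add_in HP beta_gt0 beta_lt1 jNS.
have r_j := rS_add_j HP beta_gt0 beta_lt1 jNS.
have r_out := rS_add_out HP beta_gt0 beta_lt1 jNS.
have inT t : t \in T -> t \notin S /\ t != j by rewrite inE => /andP.
do !split => //.
- move=> t s /inT[_ tj] sS; have js : (j == s) = false.
    by apply: contraNF jNS => /eqP ->.
  by rewrite row_add // js subr0; ring.
- by move=> t /inT[_ tj]; rewrite row_add //= eqxx mulr1n; field.
- exact: (r_in (fun _ => 1)).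
- exact: (r_j (fun _ => 1)).
- by move=> t /inT[tNS tj]; exact: (r_out (fun _ => 1)).
- exact: r_in.
- by move=> t /inT[tNS tj]; exact: r_out.
Qed.
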